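(* Define $G(k,T)=v(k,T)-\min_{a\in\{0,1,\dots,k\}}[v(k-a,T)+F(a)]$. Then for every $T\ge0$, the map $k\mapsto G(k,T)$ is non-decreasing.
   Context: Let $\lambda>0$ and let $N$ be a Poisson process with intensity $\lambda$, arrival times $0<\sigma_1<\sigma_2<\cdots$, and natural filtration $\mathcal F_t=\sigma(N_s:s\le t)$. Let $F:[0,\infty)\to[0,\infty)$ be strictly increasing and strictly convex with $F(0)=0$. For $k\in\{0,1,\dots\}$ let $\mathcal A_k$ be the set of $(\mathcal F_t)$-adapted, integer-valued, nonnegative, non-increasing processes $\xi$ with $\xi_0=k$ whose values change only at arrival times of $N$, and $v(k,T)=\inf_{\xi\in\mathcal A_k}\mathbb E[\sum_{i:\sigma_i\le T}F(\xi_{\sigma_i-}-\xi_{\sigma_i})+F(\xi_T)]$ (so $v(0,T)=0$). *)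

From HB Require Import structures.
From mathcomp Require Import all_boot all_order all_algebra.
From mathcomp Require Import all_classical all_reals all_analysis.
Set Implicit Arguments. Unset Strict Implicit. Unset Printing Implicit Defensive.
Import Order.TTheory GRing.Theory Num.Theory.
Import numFieldNormedType.Exports.
Local Open Scope classical_set_scope.
Local Open Scope ring_scope.

Section PoissonControl.
Context {d : measure_display} {Omega : measurableType d} {R : realType}.
Variable P : probability Omega R.

Definition interarrival (sigma : nat -> Omega -> R) (i : nat) : Omega -> R :=
  fun w => sigma i.+1 w - sigma i w.

Definition mutually_independent (X : nat -> Omega -> R) : Prop :=
  (forall i, measurable_fun setT (X i)) /\
  forall (s : seq nat) (B : nat -> set R), uniq s ->
    (forall i, measurable (B i)) ->
    P (\big[setI/setT]_(i <- s) (X i @^-1` B i)) =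
    (\prod_(i <- s) P (X i @^-1` B i))%E.

(* sigma : nat -> Omega -> R are the arrival times (sigma 0 = 0) of a
   Poisson process of intensity lam : 0 < sigma_1 < sigma_2 < ..., sigma_n -> oo,
   and the inter-arrival times are i.i.d. exponential(lam). *)
Definition poisson_arrivals (lam : R) (sigma : nat -> Omega -> R) : Prop :=
  [/\ (forall w, sigma 0%N w = 0),
      (forall i w, sigma i w < sigma i.+1 w),
      (forall w t, exists i, t < sigma i w),
      mutually_independent (interarrival sigma) &
      (forall i x, 0 <= x ->
         P [set w | x < interarrival sigma i w] = (expR (- (lam * x)))%:E)].

(* the counting process N_t = #{i >= 1 | sigma_i <= t} *)
Definition counting (sigma : nat -> Omega -> R) (t : R) (w : Omega) : nat :=
  xget 0%N [set n : nat | sigma n w <= t < sigma n.+1 w].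

Definition natF (sigma : nat -> Omega -> R) (t : R) : set (set Omega) :=
  <<s [set A | exists s (m : nat), 0 <= s <= t /\
                  A = [set w | counting sigma s w = m]] >>.

Definition admissible (sigma : nat -> Omega -> R) (k : nat)
    (xi : R -> Omega -> nat) : Prop :=
  [/\ (forall w, xi 0 w = k),
      (forall w s t, 0 <= s -> s <= t -> (xi t w <= xi s w)%N),
      (forall t (n : nat), 0 <= t -> natF sigma t [set w | xi t w = n]) &
      (forall w s t, 0 <= s -> s <= t ->
         counting sigma s w = counting sigma t w -> xi s w = xi t w)].

Definition left_lim (xi : R -> Omega -> nat) (t : R) (w : Omega) : R :=
  lim ((fun s => ((xi s w)%:R : R)) @ t^'-).

Definition cost (sigma : nat -> Omega -> R) (F : R -> R)
    (xi : R -> Omega -> nat) (T : R) (w : Omega) : \bar R :=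
  ((\sum_(i <oo | (0 < i)%N && (sigma i w <= T)%R)
      (F (left_lim xi (sigma i w) w - (xi (sigma i w) w)%:R))%:E)
   + (F (xi T w)%:R)%:E)%E.

Definition value (sigma : nat -> Omega -> R) (F : R -> R) (k : nat) (T : R)
  : \bar R :=
  ereal_inf [set (\int[P]_w cost sigma F xi T w)%E | xi in admissible sigma k].

Definition Gfun (sigma : nat -> Omega -> R) (F : R -> R) (k : nat) (T : R)
  : \bar R :=
  (value sigma F k T -
   \big[Order.min/+oo]_(a < k.+1) (value sigma F (k - a)%N T + (F a%:R)%:E))%E.

End PoissonControl.

From Pilot Require Import Defs.
From HB Require Import structures.
From mathcomp Require Import all_boot all_order all_algebra.
From mathcomp Require Import all_classical all_reals all_analysis.
From mathcomp Require Import measurable_realfun.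
From mathcomp Require Import zify ring lra.
Import Order.TTheory GRing.Theory Num.Theory.
Import numFieldNormedType.Exports.
Local Open Scope classical_set_scope.
Local Open Scope ring_scope.

(* The value function k |-> v(k, T) is discretely convex.  Given admissible
   x from k + 2 and y from k, the processes min(x, y + 1) and max(y, x - 1)
   are admissible from k + 1 and have sum x + y; at each arrival their jumps
   split the same total as the jumps of x and y but less unevenly, so by
   convexity of F their costs add up to at most cost(x) + cost(y).  Convexity
   makes v(k) - v(k - a) nondecreasing in k for fixed a, and evaluating the
   minimum defining G(k + 1, T) at a minimiser for G(k, T) gives
   G(k, T) <= G(k + 1, T). *)

(* Plain [counting] would be the counting measure of MathComp-Analysis. *)
Local Notation counting := Defs.counting.

Lemma measurable_preimage_countable d (T : sigmaRingType d) (C : countType)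
    (f : T -> C) (Q : set C) :
  (forall c, measurable (f @^-1` [set c])) -> measurable (f @^-1` Q).
Proof.
move=> mf; have -> : f @^-1` Q =
    \bigcup_c (if `[< Q c >] then f @^-1` [set c] else set0).
  apply/seteqP; split => [w Qfw|w [c _]].
    by exists (f w) => //; case: asboolP.
  by case: asboolP => // Qc /= ->.
apply: countable_bigcupT_measurable; first exact: countableP.
by move=> c; case: asboolP.
Qed.

Lemma measurable_comp_countable d d' (T : measurableType d)
    (U : measurableType d') (C : countType) (f : T -> C) (g : C -> U) :
  (forall c, measurable (f @^-1` [set c])) -> measurable_fun setT (g \o f).
Proof.
move=> mf _ B _; rewrite setTI.
exact: (@measurable_preimage_countable _ T C f (g @^-1` B) mf).
Qed.

Section convex_function.
Variables (R : realFieldType) (F : R -> R).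
Hypothesis F_convex : forall x y t, 0 <= x -> 0 <= y -> 0 < t < 1 ->
  F (t * x + (1 - t) * y) <= t * F x + (1 - t) * F y.

Lemma convexD_le_endpoints a b p : 0 <= a -> a <= p -> p <= b ->
  F p + F (a + b - p) <= F a + F b.
Proof.
move=> a0 ap pb.
have [->|p_neq_a] := eqVneq p a; first by rewrite addrAC subrr add0r.
have [->|p_neq_b] := eqVneq p b; first by rewrite addrK addrC.
have a_lt_p : a < p by rewrite lt_neqAle eq_sym p_neq_a ap.
have p_lt_b : p < b by rewrite lt_neqAle p_neq_b pb.
set t := (b - p) / (b - a).
have t01 : 0 < t < 1.
  rewrite /t; apply/andP; split.
    by rewrite divr_gt0 // subr_gt0 // (lt_trans a_lt_p).
  by rewrite ltr_pdivrMr ?mul1r; lra.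
have pE : p = t * a + (1 - t) * b by rewrite /t; field; lra.
have qE : a + b - p = t * b + (1 - t) * a by rewrite /t; field; lra.
have b0 : 0 <= b by lra.
rewrite {1}pE qE.
by have := F_convex _ _ _ a0 b0 t01; have := F_convex _ _ _ b0 a0 t01; lra.
Qed.

Lemma convexD_le_endpoints_nat A B p q : (p + q = A + B)%N ->
  (minn A B <= p <= maxn A B)%N -> F p%:R + F q%:R <= F A%:R + F B%:R.
Proof.
have key a b : (a <= p <= b)%N -> (p + q = a + b)%N ->
    F p%:R + F q%:R <= F a%:R + F b%:R.
  move=> /andP[ap pb] pq; have -> : q = (a + b - p)%N by lia.
  rewrite natrB ?natrD; last by lia.
  by apply: convexD_le_endpoints; rewrite ?ler0n ?ler_nat.
move=> pq; case: (leqP A B) => _ hp; first exact: key hp pq.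
by rewrite [F A%:R + _]addrC; apply: key hp _; rewrite pq addnC.
Qed.

End convex_function.

Section convex_sequence.
Context {R : realDomainType} {u : nat -> R}.
Hypothesis u_convex : forall n, u n.+1 + u n.+1 <= u n.+2 + u n.

Lemma convex_seq_incr_shift j n : u (j + n) - u j <= u (j.+1 + n) - u j.+1.
Proof.
elim: n => [|n IH]; first by rewrite !addn0 !subrr.
have := u_convex (j + n); rewrite !addnS !addSn in IH *; lra.
Qed.

Lemma convex_seq_gap_succ (c : nat -> R) k :
  ((u k)%:E - \big[Order.min/+oo]_(a < k.+1) ((u (k - a))%:E + (c a)%:E) <=
   (u k.+1)%:E - \big[Order.min/+oo]_(a < k.+2) ((u (k.+1 - a))%:E + (c a)%:E))%E.
Proof.
have [a _ ->] := @eq_bigmin _ _ _ +oo%E ord0 xpredT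
  (fun a : 'I_k.+1 => (u (k - a))%:E + (c a)%:E)%E isT (fun _ _ => leey _).
have [b _ minb] := @eq_bigmin _ _ _ +oo%E ord0 xpredT
  (fun b : 'I_k.+2 => (u (k.+1 - b))%:E + (c b)%:E)%E isT (fun _ _ => leey _).
have := bigmin_le +oo%E (Ordinal (leqW (ltn_ord a)))
  (fun b : 'I_k.+2 => (u (k.+1 - b))%:E + (c b)%:E)%E.
have ak : (a <= k)%N by rewrite -ltnS.
have := convex_seq_incr_shift (k - a) a.
rewrite subnK // -subSn // subnK 1?ltnW // minb /= -!EFinD !lee_fin.
lra.
Qed.

End convex_sequence.

Lemma ereal_infD_lb (R : realType) (X Y : set (\bar R)) (s b c : R) :
  ereal_inf X = b%:E -> ereal_inf Y = c%:E ->
  (forall x y, X x -> Y y -> (s%:E <= x + y)%E) -> s <= b + c.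
Proof.
move=> infX infY sXY.
have noNy (Z : set (\bar R)) r : ereal_inf Z = r%:E -> ~ Z -oo%E.
  by move=> infZ /ereal_inf_lbound; rewrite infZ leeNy_eq.
suff : ((s - b)%:E <= ereal_inf Y)%E by rewrite infY lee_fin; lra.
apply/ereal_infP => -[y| |] Yy; [|by rewrite leey|by case: (noNy _ _ infY Yy)].
suff : ((s - y)%:E <= ereal_inf X)%E by rewrite infX !lee_fin; lra.
apply/ereal_infP => -[x| |] Xx; [|by rewrite leey|by case: (noNy _ _ infX Xx)].
by have := sXY _ _ Xx Yy; rewrite -EFinD !lee_fin; lra.
Qed.

Section natural_filtration.
Context {d : measure_display} {Omega : measurableType d} {R : realType}.
Context {sigma : nat -> Omega -> R}.

Definition counting_events (t : R) : set (set Omega) :=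
  [set A | exists s (m : nat),
    0 <= s <= t /\ A = [set w | counting sigma s w = m]].

Local Notation natF_type t := (g_sigma_algebraType (counting_events t)).

Lemma natF_setT t : natF sigma t setT.
Proof. exact: (@measurableT _ (natF_type t)). Qed.

Lemma natF_set0 t : natF sigma t set0.
Proof. exact: (@measurable0 _ (natF_type t)). Qed.

Lemma natF_comp2 t (x y : Omega -> nat) (h : nat -> nat -> nat) j :
  (forall a, natF sigma t [set w | x w = a]) ->
  (forall b, natF sigma t [set w | y w = b]) ->
  natF sigma t [set w | h (x w) (y w) = j].
Proof.
move=> Fx Fy; apply: (@measurable_preimage_countable _ (natF_type t) _
  (fun w => (x w, y w)) [set c | h c.1 c.2 = j]) => -[a b].
have -> : (fun w => (x w, y w)) @^-1` [set (a, b)] =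
    [set w | x w = a] `&` [set w | y w = b].
  by apply/seteqP; split => w /=; [case=> -> ->|case=> -> ->].
exact: (@measurableI _ (natF_type t) _ _ (Fx a) (Fy b)).
Qed.

Lemma admissible_comp2 (h : nat -> nat -> nat) [a b n x y] :
  admissible sigma a x -> admissible sigma b y -> h a b = n ->
  (forall a a' b b', (a' <= a)%N -> (b' <= b)%N -> (h a' b' <= h a b)%N) ->
  admissible sigma n (fun t w => h (x t w) (y t w)).
Proof.
case=> x0 x_nonincr x_adapted x_jumps [y0 y_nonincr y_adapted y_jumps] hab h_mono.
split.
- by move=> w; rewrite x0 y0.
- by move=> w s t s0 st; apply: h_mono; [exact: x_nonincr|exact: y_nonincr].
- by move=> t j t0; apply: natF_comp2 => c; [exact: x_adapted|exact: y_adapted].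
- by move=> w s t s0 st Nst; rewrite (x_jumps w s t) // (y_jumps w s t).
Qed.

End natural_filtration.

Section arrival_times.
Context {d : measure_display} {Omega : measurableType d} {R : realType}.
Variable sigma : nat -> Omega -> R.
Hypothesis sigma0 : forall w, sigma 0%N w = 0.
Hypothesis sigma_ltS : forall i w, sigma i w < sigma i.+1 w.
Hypothesis sigma_unbounded : forall w t, exists i, t < sigma i w.
Hypothesis interarrival_measurable :
  forall i, measurable_fun setT (interarrival sigma i).

Lemma sigma_le w : {homo sigma^~ w : i j / (i <= j)%N >-> i <= j}.
Proof. by apply: homo_leq => // [? ? ? /le_trans|i]; [apply|exact/ltW]. Qed.

Lemma sigma_ge0 i w : 0 <= sigma i w.
Proof. by rewrite -(sigma0 w) sigma_le. Qed.

Lemma counting_eq [i w t] :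
  sigma i w <= t < sigma i.+1 w -> counting sigma t w = i.
Proof.
move=> /[dup] iwt /andP[it ti]; apply: xget_unique => // j /andP[jt tj].
apply/eqP; rewrite eqn_leq; apply/andP; split; rewrite leqNgt; apply/negP.
  by move/(sigma_le w); rewrite leNgt (le_lt_trans jt ti).
by move/(sigma_le w); rewrite leNgt (le_lt_trans it tj).
Qed.

Lemma arrival_interval_exists w t :
  0 <= t -> exists i, sigma i w <= t < sigma i.+1 w.
Proof.
move=> t0; have ex : exists j, t < sigma j w by apply: sigma_unbounded.
case: (ex_minnP ex) => -[|i]; first by rewrite sigma0 ltNge t0.
move=> ti imin; exists i; rewrite ti andbT leNgt; apply/negP => /imin.
by rewrite ltnn.
Qed.

Lemma sigma_measurable i : measurable_fun setT (sigma i).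
Proof.
elim: i => [|i IH].
  by rewrite (_ : sigma 0%N = cst 0) //; apply/funext => w; rewrite sigma0.
rewrite (_ : sigma i.+1 = sigma i \+ interarrival sigma i).
  exact: measurable_funD.
by apply/funext => w; rewrite /interarrival /= addrC subrK.
Qed.

Lemma measurable_sigma_le i t : measurable [set w | sigma i w <= t].
Proof.
rewrite -[X in measurable X]setTI.
exact: (measurable_fun_ler (sigma_measurable i) (measurable_cst t)).
Qed.

Lemma measurable_sigma_gt i t : measurable [set w | t < sigma i w].
Proof.
rewrite -[X in measurable X]setTI.
exact: (measurable_fun_ltr (measurable_cst t) (sigma_measurable i)).
Qed.

Lemma natF_measurable t A : 0 <= t -> natF sigma t A -> measurable A.
Proof.
move=> t0; apply: smallest_sub; first exact: sigma_algebra_measurable.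
move=> _ [s [m [/andP[s0 _] ->]]].
rewrite (_ : [set w | _] =
    [set w | sigma m w <= s] `&` [set w | s < sigma m.+1 w]).
  by apply: measurableI; [exact: measurable_sigma_le|exact: measurable_sigma_gt].
apply/seteqP; split => w /=.
  have [i iws] := arrival_interval_exists w _ s0.
  by rewrite (counting_eq iws) => <-; apply/andP.
by case=> ms sm; apply: counting_eq; rewrite ms sm.
Qed.

Definition arrival_state (xi : R -> Omega -> nat) i w := xi (sigma i w) w.

Section admissible_process.
Context {k : nat} {xi : R -> Omega -> nat}.
Hypothesis xi_adm : admissible sigma k xi.

Lemma admissible_between i w t :
  sigma i w <= t < sigma i.+1 w -> xi t w = arrival_state xi i w.
Proof.
case: xi_adm => _ _ _ xi_jumps iwt; symmetry; case/andP: (iwt) => it _.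
apply: (xi_jumps w _ _ (sigma_ge0 i w) it).
by rewrite (counting_eq iwt) (@counting_eq i) // lexx sigma_ltS.
Qed.

Lemma arrival_state_nonincr i w :
  (arrival_state xi i.+1 w <= arrival_state xi i w)%N.
Proof.
by case: xi_adm => _ xi_nonincr _ _; apply: xi_nonincr; rewrite ?sigma_ge0 ?ltW.
Qed.

Lemma left_lim_arrival i w :
  left_lim xi (sigma i.+1 w) w = (arrival_state xi i w)%:R.
Proof.
apply: cvg_lim; first exact: Rhausdorff.
apply: cvg_near_cst; near=> s; rewrite (@admissible_between i w s) //.
by apply/andP; split; near: s; [exact: nbhs_left_ge|exact: nbhs_left_lt].
Unshelve. all: by end_near.
Qed.

Lemma admissible_measurable t m : 0 <= t -> measurable [set w | xi t w = m].
Proof.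
case: xi_adm => _ _ xi_adapted _ t0.
exact: natF_measurable t0 (xi_adapted _ _ t0).
Qed.

(* Between two arrivals the process is constant, so its value at the arrival
   time is its value at any rational time of the inter-arrival interval. *)
Lemma arrival_state_measurable i m :
  measurable [set w | arrival_state xi i w = m].
Proof.
have -> : [set w | arrival_state xi i w = m] = \bigcup_(q : rat)
    (if 0 <= ratr q :> R then [set w | sigma i w <= ratr q] `&`
       [set w | ratr q < sigma i.+1 w] `&` [set w | xi (ratr q) w = m] else set0).
  apply/seteqP; split => w /=.
    move=> xiw; have [q] := rat_in_itvoo (sigma_ltS i w).
    rewrite in_itv /= => /andP[iq qi]; exists q => //.
    have q0 : 0 <= ratr q :> R by apply: le_trans (sigma_ge0 _ _) (ltW iq).
    by rewrite q0 /= (@admissible_between i w) ?(ltW iq) ?qi.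
  case=> q _; case: ifP => // q0 [[/= iq qi] <-].
  by rewrite (@admissible_between i w) ?iq ?qi.
apply: bigcupT_measurable_rat => q; case: ifP => // q0.
apply: measurableI; first apply: measurableI.
- exact: measurable_sigma_le.
- exact: measurable_sigma_gt.
- exact: admissible_measurable.
Qed.

End admissible_process.

Variables (F : R -> R) (T : R).
Hypotheses (F_ge0 : forall x, 0 <= x -> 0 <= F x) (T_ge0 : 0 <= T).

Definition jump_cost (xi : R -> Omega -> nat) i w : \bar R :=
  if (0 < i)%N && (sigma i w <= T) then
    (F (arrival_state xi i.-1 w - arrival_state xi i w)%:R)%:E
  else 0%E.

Lemma cost_series [k xi] w : admissible sigma k xi ->
  cost sigma F xi T w = (\sum_(i <oo) jump_cost xi i w + (F (xi T w)%:R)%:E)%E.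
Proof.
move=> xi_adm; rewrite /cost /jump_cost -eseries_mkcond; congr (_ + _)%E.
apply: eq_eseriesr => -[|i] //= _.
rewrite (left_lim_arrival xi_adm) natrB //.
exact: (arrival_state_nonincr xi_adm).
Qed.

Lemma jump_cost_ge0 xi i w : (0 <= jump_cost xi i w)%E.
Proof. by rewrite /jump_cost; case: ifP => // _; rewrite lee_fin F_ge0. Qed.

Lemma cost_ge0 [k xi] w : admissible sigma k xi -> (0 <= cost sigma F xi T w)%E.
Proof.
move=> xi_adm; rewrite (cost_series _ xi_adm) adde_ge0 ?lee_fin ?F_ge0 //.
by apply: nneseries_ge0 => n _ _; apply: jump_cost_ge0.
Qed.

Lemma cost_measurable [k xi] : admissible sigma k xi ->
  measurable_fun setT (cost sigma F xi T).
Proof.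
move=> xi_adm.
rewrite (_ : cost sigma F xi T = (fun w => \sum_(i <oo) jump_cost xi i w) \+
    (fun w => (F (xi T w)%:R)%:E))%E; last first.
  by apply/funext => w; rewrite (cost_series _ xi_adm).
apply: emeasurable_funD; last first.
  apply: (@measurable_comp_countable _ _ _ _ _ (xi T) (fun n => (F n%:R)%:E)).
  by move=> c; apply: (admissible_measurable xi_adm).
apply: (@ge0_emeasurable_sum _ _ _ _ _ xpredT) => [n w _ _|i _].
  exact: jump_cost_ge0.
pose state w := (arrival_state xi i.-1 w, arrival_state xi i w, sigma i w <= T).
apply: (@measurable_comp_countable _ _ _ _ _ state
  (fun c => if (0 < i)%N && c.2 then (F (c.1.1 - c.1.2)%:R)%:E else 0%E)).
move=> [[a b] c]; rewrite (_ : _ @^-1` _ =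
    [set w | arrival_state xi i.-1 w = a] `&` [set w | arrival_state xi i w = b]
    `&` (fun w => sigma i w <= T) @^-1` [set c]).
  apply: measurableI; first apply: measurableI.
  - exact: (arrival_state_measurable xi_adm).
  - exact: (arrival_state_measurable xi_adm).
  - rewrite -[X in measurable X]setTI.
    exact: (measurable_fun_ler (sigma_measurable i) (measurable_cst T)
      measurableT).
apply/seteqP; split => w; rewrite /state /=; first by case=> -> -> ->.
by case=> -[-> ->] ->.
Qed.

Hypothesis F0 : F 0 = 0.
Variable P : probability Omega R.

Lemma admissible_cst k : admissible sigma k (fun _ _ => k).
Proof.
split => // t n _; have [<-|kn] := eqVneq k n.
  rewrite (_ : [set _ : Omega | k = k] = setT); first exact: natF_setT.
  by apply/seteqP.
rewrite (_ : [set _ : Omega | k = n] = set0); first exact: natF_set0.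
by apply/seteqP; split => // w /= /eqP; rewrite (negbTE kn).
Qed.

Lemma value_le_cst k : (value P sigma F k T <= (F k%:R)%:E)%E.
Proof.
apply: ereal_inf_lbound; exists (fun _ _ => k); first exact: admissible_cst.
rewrite (_ : cost sigma F _ T = cst (F k%:R)%:E).
  by rewrite integral_cst // -[RHS]mule1 -(probability_setT P).
apply/funext => w; rewrite (cost_series _ (admissible_cst k)) eseries0 ?add0e //.
by move=> i _ _; rewrite /jump_cost subnn F0; case: ifP.
Qed.

Lemma value_fin_num k : value P sigma F k T \is a fin_num.
Proof.
rewrite ge0_fin_numE; first exact: le_lt_trans (value_le_cst k) (ltry _).
apply/ereal_infP => _ [xi xi_adm <-].
by apply: integral_ge0 => w _; exact: (cost_ge0 w xi_adm).
Qed.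

Definition couple_dn (x y : R -> Omega -> nat) t w := minn (x t w) (y t w).+1.
Definition couple_up (x y : R -> Omega -> nat) t w := maxn (y t w) (x t w - 1).

Hypothesis F_convex : forall x y t, 0 <= x -> 0 <= y -> 0 < t < 1 ->
  F (t * x + (1 - t) * y) <= t * F x + (1 - t) * F y.

Section coupling.
Context {m : nat} {x y : R -> Omega -> nat}.
Hypotheses (x_adm : admissible sigma m.+2 x) (y_adm : admissible sigma m y).

Lemma admissible_couple_dn : admissible sigma m.+1 (couple_dn x y).
Proof.
by apply: (admissible_comp2 (fun a b => minn a b.+1) x_adm y_adm) => *; lia.
Qed.

Lemma admissible_couple_up : admissible sigma m.+1 (couple_up x y).
Proof.
by apply: (admissible_comp2 (fun a b => maxn b (a - 1)) x_adm y_adm) => *; lia.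
Qed.

Lemma cost_couple w :
  (cost sigma F (couple_dn x y) T w + cost sigma F (couple_up x y) T w <=
   cost sigma F x T w + cost sigma F y T w)%E.
Proof.
rewrite (cost_series _ admissible_couple_dn) (cost_series _ admissible_couple_up).
rewrite (cost_series _ x_adm) (cost_series _ y_adm) addeACA [leRHS]addeACA.
apply: leeD.
  rewrite -!nneseriesD; try by move=> *; apply: jump_cost_ge0.
  apply: lee_nneseries => [*|i _]; first by rewrite adde_ge0 ?jump_cost_ge0.
  rewrite /jump_cost; case: ifP => [/andP[i0 _]|_]; last by rewrite adde0.
  rewrite -!EFinD lee_fin /arrival_state /couple_dn /couple_up.
  have := arrival_state_nonincr x_adm i.-1 w.
  have := arrival_state_nonincr y_adm i.-1 w.
  rewrite /arrival_state prednK // => ? ?.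
  by apply: convexD_le_endpoints_nat => //; lia.
rewrite -!EFinD lee_fin /couple_dn /couple_up.
apply: convexD_le_endpoints_nat => //; lia.
Qed.

Lemma integral_cost_couple :
  (\int[P]_w cost sigma F (couple_dn x y) T w +
   \int[P]_w cost sigma F (couple_up x y) T w <=
   \int[P]_w cost sigma F x T w + \int[P]_w cost sigma F y T w)%E.
Proof.
have dn_adm := admissible_couple_dn; have up_adm := admissible_couple_up.
rewrite -ge0_integralD //; last 4 first.
- by move=> w _; exact: (cost_ge0 w dn_adm).
- exact: (cost_measurable dn_adm).
- by move=> w _; exact: (cost_ge0 w up_adm).
- exact: (cost_measurable up_adm).
rewrite -ge0_integralD //; last 4 first.
- by move=> w _; exact: (cost_ge0 w x_adm).
- exact: (cost_measurable x_adm).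
- by move=> w _; exact: (cost_ge0 w y_adm).
- exact: (cost_measurable y_adm).
apply: ge0_le_integral => //.
- by move=> w _; rewrite adde_ge0 // (cost_ge0 w dn_adm, cost_ge0 w up_adm).
- exact: emeasurable_funD (cost_measurable dn_adm) (cost_measurable up_adm).
- exact: emeasurable_funD (cost_measurable x_adm) (cost_measurable y_adm).
- by move=> w _; exact: cost_couple.
Qed.

End coupling.

Lemma value_convex m :
  fine (value P sigma F m.+1 T) + fine (value P sigma F m.+1 T) <=
  fine (value P sigma F m.+2 T) + fine (value P sigma F m T).
Proof.
apply: (@ereal_infD_lb _ _ _ _ _ _ (esym (fineK (value_fin_num _)))
  (esym (fineK (value_fin_num _)))) => _ _ [x x_adm <-] [y y_adm <-].
apply: le_trans _ (integral_cost_couple x_adm y_adm).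
rewrite EFinD fineK ?value_fin_num //.
apply: leeD; apply: ereal_inf_lbound.
  by exists (couple_dn x y) => //; exact: admissible_couple_dn.
by exists (couple_up x y) => //; exact: admissible_couple_up.
Qed.

Lemma Gfun_le_succ k : (Gfun P sigma F k T <= Gfun P sigma F k.+1 T)%E.
Proof.
pose u j := fine (value P sigma F j T).
have vE j : value P sigma F j T = (u j)%:E by rewrite fineK ?value_fin_num.
rewrite /Gfun !vE; under eq_bigr do rewrite vE.
under [in leRHS]eq_bigr do rewrite vE.
exact: (convex_seq_gap_succ value_convex (fun n => F n%:R)).
Qed.

End arrival_times.

Theorem lemma2p9 (d : measure_display) (Omega : measurableType d)
  (R : realType) (P : probability Omega R) (lam : R) (sigma : nat -> Omega -> R)
  (F : R -> R) :
  0 < lam ->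
  poisson_arrivals P lam sigma ->
  F 0 = 0 ->
  (forall x, 0 <= x -> 0 <= F x) ->
  (forall x y, 0 <= x -> x < y -> F x < F y) ->
  (forall x y t, 0 <= x -> 0 <= y -> x != y -> 0 < t < 1 ->
     F (t * x + (1 - t) * y) < t * F x + (1 - t) * F y) ->
  forall T : R, 0 <= T ->
  forall k k' : nat, (k <= k')%N ->
    (Gfun P sigma F k T <= Gfun P sigma F k' T)%E.
Proof.
move=> _ [sigma0 sigma_ltS sigma_unbounded [interarrival_measurable _] _].
move=> F0 F_ge0 _ F_strict_convex T T_ge0.
have F_convex x y t : 0 <= x -> 0 <= y -> 0 < t < 1 ->
    F (t * x + (1 - t) * y) <= t * F x + (1 - t) * F y.
  move=> x0 y0 t01; have [<-|xy] := eqVneq x y; last exact/ltW/F_strict_convex.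
  have e z : t * z + (1 - t) * z = z by ring.
  by rewrite !e.
apply: (@homo_leq _ (fun k => Gfun P sigma F k T) (fun a b => a <= b)%E).
- exact: lexx.
- exact: le_trans.
- by apply: Gfun_le_succ.
Qed.
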